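(* Let $k$ be a commutative ring, $B\to A$ a morphism of $k$-algebras, and let $t=\sum_is_i\otimes_Bt_i\in(A\otimes_BA)^B$ and $m,u\in A^B$ satisfy: (a) $\sum_is_it_i=1$ and $\sum_{i,j}s_i\otimes_Bt_is_j\otimes_Bt_j=\sum_is_i\otimes_B1\otimes_Bt_i$; (b) $tm=mt^2$; (c) $tu=u\otimes_B1$; (d) $m^2=\sum_ims_imt_i$; (e) $mu=\sum_ims_iut_i=1$. Let $(A\otimes_BA)_t$ denote the $A$-bimodule $A\otimes_BA$ equipped with $\Delta_t(a\otimes_Ba')=\sum_iams_i\otimes_Bt_i\otimes_Ba'$ (viewed in $(A\otimes_BA)\otimes_A(A\otimes_BA)\cong A\otimes_BA\otimes_BA$) and $e_t(a\otimes_Ba')=aua'$. Then the element $mt=\sum_ims_i\otimes_Bt_i$ is group-like in $(A\otimes_BA)_t$, i.e. $e_t(mt)=1$ and $\Delta_t(mt)=mt\otimes_Amt$.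
   Context: $A^B=\{a\in A\mid ba=ab\ \forall b\in B\}$ and $(A\otimes_BA)^B=\{x\in A\otimes_BA\mid bx=xb\ \forall b\in B\}$, using the natural $A$-bimodule structure of $A\otimes_BA$ (so e.g. $tm=\sum_is_i\otimes_Bt_im$ and $mt=\sum_ims_i\otimes_Bt_i$). The product on $(A\otimes_BA)^B$ is $(\sum_is_i\otimes_Bt_i)(\sum_js'_j\otimes_Bt'_j)=\sum_{i,j}s_is'_j\otimes_Bt'_jt_i$; in particular $t^2=\sum_{i,j}s_is_j\otimes_Bt_jt_i$. The isomorphism $(A\otimes_BA)\otimes_A(A\otimes_BA)\cong A\otimes_BA\otimes_BA$ is $a\otimes_Bb\otimes_Ac\otimes_Bd\mapsto a\otimes_Bbc\otimes_Bd$. *)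

(* Tensor products over B are not in the library; we define
   them honestly by their universal property (any model is canonically
   isomorphic to the usual construction). *)
From HB Require Import structures.
From mathcomp Require Import all_boot all_order all_algebra.
Set Implicit Arguments. Unset Strict Implicit. Unset Printing Implicit Defensive.
Import GRing.Theory.
Local Open Scope ring_scope.

Definition addmap (U V : zmodType) (h : U -> V) : Prop :=
  forall x y, h (x + y) = h x + h y.

Definition balanced2 (B A : nzRingType) (f : B -> A) (M : zmodType)
  (g : A -> A -> M) : Prop :=
  [/\ forall a, addmap (g a), forall a', addmap (fun a => g a a')
    & forall a b a', g (a * f b) a' = g a (f b * a')].

Definition is_tensor2 (B A : nzRingType) (f : B -> A) (T : zmodType)
  (tens : A -> A -> T) : Prop :=
  balanced2 f tens /\
  forall (M : zmodType) (g : A -> A -> M), balanced2 f g ->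
    exists h : T -> M, [/\ addmap h, forall a a', h (tens a a') = g a a'
      & forall h' : T -> M, addmap h' -> (forall a a', h' (tens a a') = g a a') ->
          forall x, h' x = h x].

Definition balanced3 (B A : nzRingType) (f : B -> A) (M : zmodType)
  (g : A -> A -> A -> M) : Prop :=
  [/\ forall a a', addmap (g a a'), forall a a'', addmap (fun a' => g a a' a''),
      forall a' a'', addmap (fun a => g a a' a''),
      forall a b a' a'', g (a * f b) a' a'' = g a (f b * a') a''
    & forall a a' b a'', g a (a' * f b) a'' = g a a' (f b * a'')].

Definition is_tensor3 (B A : nzRingType) (f : B -> A) (T : zmodType)
  (tens : A -> A -> A -> T) : Prop :=
  balanced3 f tens /\
  forall (M : zmodType) (g : A -> A -> A -> M), balanced3 f g ->
    exists h : T -> M, [/\ addmap h, forall a a' a'', h (tens a a' a'') = g a a' a''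
      & forall h' : T -> M, addmap h' ->
          (forall a a' a'', h' (tens a a' a'') = g a a' a'') ->
          forall x, h' x = h x].

From HB Require Import structures.
From mathcomp Require Import all_boot all_order all_algebra.
Set Implicit Arguments. Unset Strict Implicit. Unset Printing Implicit Defensive.
Import GRing.Theory.
Local Open Scope ring_scope.

(* The counit condition is (e): e_t(mt) = sum_i m s_i u t_i = 1.  For the
   comultiplication, both sides reduce to sum_(i,k) m^2 s_i s_k (x) t_k (x) t_i.
   On the left, Delta_t(mt) = sum_(i,k) m s_i m s_k (x) t_k (x) t_i; pushing (a)
   through x (x) y (x) z |-> sum_k m x m y s_k (x) t_k (x) z turns it into the
   same sum with the middle factor sum_i m s_i m t_i, which is m^2 by (d).  On the
   right, mt (x)_A mt is rewritten by (b) and then by (a).  Each step transports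
   an identity between sums of elementary tensors along a B-balanced map, which
   the universal property allows; B-centrality of t and m keeps the maps balanced. *)

Lemma addmap0 (U V : zmodType) (h : U -> V) : addmap h -> h 0 = 0.
Proof. by move=> hD; apply: (@addrI _ (h 0)); rewrite -hD !addr0. Qed.

Lemma addmap_sum (U V : zmodType) (h : U -> V) : addmap h ->
  forall (I : Type) (r : seq I) (P : pred I) (F : I -> U),
  h (\sum_(i <- r | P i) F i) = \sum_(i <- r | P i) h (F i).
Proof. by move=> hD I r P F; rewrite (big_morph h hD (addmap0 hD)). Qed.

Section BalancedMaps.
Variables (B A : nzRingType) (f : B -> A) (M : zmodType).

Lemma balanced2_sum (I : Type) (r : seq I) (G : I -> A -> A -> M) :
  (forall i, balanced2 f (G i)) -> balanced2 f (fun x y => \sum_(i <- r) G i x y).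
Proof.
move=> GB; split=> [x a a'|y a a'|x b y].
- by rewrite -big_split; apply: eq_bigr => i _; case: (GB i) => /(_ x) ->.
- by rewrite -big_split; apply: eq_bigr => i _; case: (GB i) => _ /(_ y) ->.
- by apply: eq_bigr => i _; case: (GB i) => _ _ ->.
Qed.

Lemma balanced3_mull (a : A) (g : A -> A -> A -> M) :
  balanced3 f g -> balanced3 f (fun x y z => g (a * x) y z).
Proof.
case=> gD3 gD2 gD1 gB1 gB2; split=> // [y z x x'|x b y z]; first by rewrite mulrDr gD1.
by rewrite mulrA gB1.
Qed.

Lemma balanced3_slice (a c d : A) (g : A -> A -> A -> M) :
  balanced3 f g -> balanced2 f (fun x y => g (a * x) (y * c) d).
Proof.
case=> gD3 gD2 gD1 gB1 _; split=> [x y y'|y x x'|x b y]; first by rewrite mulrDl gD2.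
  by rewrite mulrDr gD1.
by rewrite mulrA gB1 mulrA.
Qed.

Lemma balanced3_unit (g : A -> A -> A -> M) :
  balanced3 f g -> balanced2 f (fun x z => g x 1 z).
Proof.
case=> gD3 gD2 gD1 gB1 gB2; split=> // x b z.
by rewrite gB1 mulr1 -{1}[f b]mul1r gB2.
Qed.

Lemma balanced3_mulmid (c : A) (g : A -> A -> M) :
  (forall b, f b * c = c * f b) -> balanced2 f g ->
  balanced3 f (fun x y z => g (x * c * y) z).
Proof.
move=> cC [gD2 gD1 gB]; split=> [x y|x z y y'|y z x x'|x b y z|x y b z].
- exact: gD2.
- by rewrite mulrDr gD1.
- by rewrite !mulrDl gD1.
- by rewrite -!mulrA [f b * (c * _)]mulrA cC -mulrA.
- by rewrite mulrA gB.
Qed.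

End BalancedMaps.

Section Transfer.
Variables (B A : nzRingType) (f : B -> A) (T M : zmodType).
Variables (I J : Type) (r : seq I) (r' : seq J).

Lemma tensor2_transfer (tens : A -> A -> T) (g : A -> A -> M)
    (x y : I -> A) (x' y' : J -> A) :
  is_tensor2 f tens -> balanced2 f g ->
  \sum_(i <- r) tens (x i) (y i) = \sum_(j <- r') tens (x' j) (y' j) ->
  \sum_(i <- r) g (x i) (y i) = \sum_(j <- r') g (x' j) (y' j).
Proof.
case=> _ lift /lift[h [hD htens _]] /(congr1 h); rewrite !addmap_sum //.
by under eq_bigr do rewrite htens; under [in RHS]eq_bigr do rewrite htens.
Qed.

Lemma tensor3_transfer (tens : A -> A -> A -> T) (g : A -> A -> A -> M)
    (x y z : I -> A) (x' y' z' : J -> A) :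
  is_tensor3 f tens -> balanced3 f g ->
  \sum_(i <- r) tens (x i) (y i) (z i) = \sum_(j <- r') tens (x' j) (y' j) (z' j) ->
  \sum_(i <- r) g (x i) (y i) (z i) = \sum_(j <- r') g (x' j) (y' j) (z' j).
Proof.
case=> _ lift /lift[h [hD htens _]] /(congr1 h); rewrite !addmap_sum //.
by under eq_bigr do rewrite htens; under [in RHS]eq_bigr do rewrite htens.
Qed.

End Transfer.

Section CentralTensor.
Variables (B A : nzRingType) (f : B -> A) (T : zmodType) (tens : A -> A -> T).
Hypothesis tensP : is_tensor2 f tens.
Variables (n : nat) (s t : 'I_n -> A).
Hypothesis t_central : forall b, \sum_(i < n) tens (f b * s i) (t i)
                               = \sum_(i < n) tens (s i) (t i * f b).

Lemma central_balanced2 (M : zmodType) (g : A -> A -> M) :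
  balanced2 f g ->
  forall b, \sum_(i < n) g (f b * s i) (t i) = \sum_(i < n) g (s i) (t i * f b).
Proof. by move=> gB b; apply: tensor2_transfer tensP gB (t_central b). Qed.

Definition tmid (M : zmodType) (g : A -> A -> A -> M) x y z :=
  \sum_(k < n) g (x * s k) (t k * y) z.

Lemma balanced3_tmid (M : zmodType) (g : A -> A -> A -> M) :
  balanced3 f g -> balanced3 f (tmid g).
Proof.
move=> gB; have [gD3 gD2 gD1 _ gB2] := gB.
split=> [x y z z'|x z y y'|y z x x'|x b y z|x y b z]; rewrite /tmid.
- by rewrite -big_split; apply: eq_bigr => k _; apply: gD3.
- by rewrite -big_split; apply: eq_bigr => k _; rewrite mulrDr gD2.
- by rewrite -big_split; apply: eq_bigr => k _; rewrite mulrDl gD1.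
- under eq_bigr do rewrite -mulrA.
  rewrite (central_balanced2 (balanced3_slice x y z gB)).
  by apply: eq_bigr => k _; rewrite mulrA.
- by apply: eq_bigr => k _; rewrite mulrA gB2.
Qed.

End CentralTensor.

Section GroupLike.
Variables (B A : nzRingType) (f : B -> A).
Variables (T2 : zmodType) (tens2 : A -> A -> T2) (T3 : zmodType) (tens3 : A -> A -> A -> T3).
Hypotheses (tens2P : is_tensor2 f tens2) (tens3P : is_tensor3 f tens3).
Variables (n : nat) (s t : 'I_n -> A) (m : A).
Hypothesis t_central : forall b, \sum_(i < n) tens2 (f b * s i) (t i)
                               = \sum_(i < n) tens2 (s i) (t i * f b).
Hypothesis m_central : forall b, f b * m = m * f b.
Hypothesis t_coassoc : \sum_(i < n) \sum_(j < n) tens3 (s i) (t i * s j) (t j)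
                     = \sum_(i < n) tens3 (s i) 1 (t i).
Hypothesis tm_eq : \sum_(i < n) tens2 (s i) (t i * m)
                 = \sum_(i < n) \sum_(j < n) tens2 (m * (s i * s j)) (t j * t i).
Hypothesis m2_eq : m ^+ 2 = \sum_(i < n) m * s i * m * t i.

Let tens3B : balanced3 f tens3. Proof. by case: tens3P. Qed.

Lemma t_coassoc_balanced (M : zmodType) (g : A -> A -> A -> M) : balanced3 f g ->
  \sum_(i < n) \sum_(j < n) g (s i) (t i * s j) (t j) = \sum_(i < n) g (s i) 1 (t i).
Proof.
by move=> gB; move: t_coassoc; rewrite !pair_bigA; apply: tensor3_transfer tens3P gB.
Qed.

Lemma tm_eq_balanced (M : zmodType) (g : A -> A -> M) : balanced2 f g ->
  \sum_(i < n) g (s i) (t i * m) = \sum_(i < n) \sum_(j < n) g (m * (s i * s j)) (t j * t i).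
Proof.
by move=> gB; move: tm_eq; rewrite !pair_bigA; apply: tensor2_transfer tens2P gB.
Qed.

Lemma comult_mt (D : T2 -> T3) : addmap D ->
  (forall a a', D (tens2 a a') = \sum_(i < n) tens3 (a * m * s i) (t i) a') ->
  D (\sum_(i < n) tens2 (m * s i) (t i))
  = \sum_(i < n) \sum_(k < n) tens3 (m ^+ 2 * s i * s k) (t k) (t i).
Proof.
move=> DD DE.
(* Written with [t k * 1] so that it is literally [tmid] at middle argument 1. *)
pose Dm x z := \sum_(k < n) tens3 (m * (x * s k)) (t k * 1) z.
have DmB : balanced2 f Dm :=
  balanced3_unit (balanced3_tmid tens2P t_central (balanced3_mull m tens3B)).
have /= coassoc_Dm := t_coassoc_balanced (balanced3_mulmid m_central DmB).
rewrite (addmap_sum DD); transitivity (\sum_(i < n) Dm (s i * m * 1) (t i)).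
  by apply: eq_bigr => i _; rewrite DE; apply: eq_bigr => k _; rewrite !mulr1 !mulrA.
rewrite -coassoc_Dm exchange_big /=; apply: eq_bigr => j _.
have [_ DmD _] := DmB.
transitivity (Dm (\sum_(i < n) s i * m * (t i * s j)) (t j)).
  by rewrite (addmap_sum (DmD (t j))).
rewrite /Dm; apply: eq_bigr => k _; rewrite mulr1 mulrA; congr (tens3 (_ * _)).
by rewrite m2_eq mulr_suml mulr_sumr; apply: eq_bigr => i _; rewrite !mulrA.
Qed.

Lemma mt_tensor_mt :
  \sum_(i < n) \sum_(j < n) tens3 (m * s i) (t i * (m * s j)) (t j)
  = \sum_(i < n) \sum_(k < n) tens3 (m ^+ 2 * s i * s k) (t k) (t i).
Proof.
pose phi x y := \sum_(j < n) tens3 (m * x) (y * s j) (t j).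
have /= tm_phi := tm_eq_balanced (balanced2_sum (index_enum 'I_n)
  (fun j => balanced3_slice m (s j) (t j) tens3B) : balanced2 f phi).
have /= coassoc_tmid := t_coassoc_balanced
  (balanced3_tmid tens2P t_central (balanced3_mull (m ^+ 2) tens3B)).
transitivity (\sum_(i < n) phi (s i) (t i * m)).
  by apply: eq_bigr => i _; apply: eq_bigr => j _; rewrite mulrA.
rewrite tm_phi; transitivity (\sum_(i < n) \sum_(j < n) tmid s t
  (fun x y z => tens3 (m ^+ 2 * x) y z) (s i) (t i * s j) (t j)).
  apply: eq_bigr => i _; rewrite exchange_big; apply: eq_bigr => j _.
  by apply: eq_bigr => k _; rewrite expr2 !mulrA.
rewrite coassoc_tmid; apply: eq_bigr => i _; apply: eq_bigr => k _.
by rewrite mulr1 mulrA.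
Qed.

End GroupLike.

Theorem lemma5p2 (k : comNzRingType) (B A : algType k)
  (f : {lrmorphism B -> A})
  (T2 : zmodType) (tens2 : A -> A -> T2) (T3 : zmodType) (tens3 : A -> A -> A -> T3)
  (HT2 : is_tensor2 f tens2) (HT3 : is_tensor3 f tens3)
  (n : nat) (s t : 'I_n -> A) (m u : A)
  (* t = \sum_i s_i (x) t_i lies in (A (x)_B A)^B *)
  (HtB : forall b : B, \sum_(i < n) tens2 (f b * s i) (t i)
                     = \sum_(i < n) tens2 (s i) (t i * f b))
  (HmB : forall b : B, f b * m = m * f b)
  (HuB : forall b : B, f b * u = u * f b)
  (Ha1 : \sum_(i < n) s i * t i = 1)
  (Ha2 : \sum_(i < n) \sum_(j < n) tens3 (s i) (t i * s j) (t j)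
         = \sum_(i < n) tens3 (s i) 1 (t i))
  (Hb : \sum_(i < n) tens2 (s i) (t i * m)
        = \sum_(i < n) \sum_(j < n) tens2 (m * (s i * s j)) (t j * t i))
  (Hc : \sum_(i < n) tens2 (s i) (t i * u) = tens2 u 1)
  (Hd : m ^+ 2 = \sum_(i < n) m * s i * m * t i)
  (He1 : m * u = 1)
  (He2 : \sum_(i < n) m * s i * u * t i = 1) :
  (* e_t(mt) = 1, for the counit e_t(a (x) a') = a u a' *)
  (forall e : T2 -> A, addmap e -> (forall a a', e (tens2 a a') = a * u * a') ->
     e (\sum_(i < n) tens2 (m * s i) (t i)) = 1)
  /\
  (* Delta_t(mt) = mt (x)_A mt, for Delta_t(a (x) a') = \sum_i a m s_i (x) t_i (x) a' *)
  (forall D : T2 -> T3, addmap D ->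
     (forall a a', D (tens2 a a') = \sum_(i < n) tens3 (a * m * s i) (t i) a') ->
     D (\sum_(i < n) tens2 (m * s i) (t i))
     = \sum_(i < n) \sum_(j < n) tens3 (m * s i) (t i * (m * s j)) (t j)).
Proof.
split=> [e eD eE | D DD DE].
  by rewrite (addmap_sum eD) -He2; apply: eq_bigr => i _; rewrite eE.
by rewrite (comult_mt HT2 HT3 HtB HmB Ha2 Hd DD DE) (mt_tensor_mt HT2 HT3 HtB Ha2 Hb).
Qed.
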